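(* Let $p(n,k)$ be the number of $\mathbf{3}$-free naturally labelled posets on $[n]$ with exactly $k$ minimal elements. Then $p(0,0)=1$, $p(n,0)=0$ for $n\ge1$, $p(n,k)=0$ for $n<k$, and for $n\ge1$, $k\ge1$: $$p(n,k)=p(n-1,k-1)+(2^k-1)\,p(n-1,k).$$ Consequently $p(n,k)=S_2[n,k]$, where the $q$-Stirling numbers of the second kind $S_q[n,k]$ satisfy $S_q[n,k]=S_q[n-1,k-1]+[k]_q\,S_q[n-1,k]$ with $[k]_q=1+q+\dots+q^{k-1}$ and the same initial conditions. Moreover, the bivariate generating function $F(z,y)=\sum_{n\ge k\ge 0}p(n,k)z^ny^k$ satisfies $$F(z,y)=1+z\big(F(z,2y)-(1-y)F(z,y)\big),$$ and $$F(z,y)=\sum_{k\ge0}\frac{z^ky^k}{\prod_{i=1}^k\big(1-(2^i-1)z\big)}.$$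
   Context: A partial order $\preceq$ on $[n]$ is naturally labelled if $x\prec y$ implies $x<y$. It is $\mathbf{3}$-free if there are no three elements $x\prec y\prec z$. *)

From mathcomp Require Import all_boot all_order all_algebra.
Set Implicit Arguments. Unset Strict Implicit. Unset Printing Implicit Defensive.
Import GRing.Theory.

(* A partial order on [n] = 'I_n is encoded by its graph R (the relation x <= y),
   as a set of pairs. *)
Section Posets.
Variable n : nat.
Implicit Type R : {set 'I_n * 'I_n}.

Definition is_poset R : bool :=
  [&& [forall x, (x, x) \in R],
      [forall x, forall y, ((x, y) \in R) && ((y, x) \in R) ==> (x == y)] &
      [forall x, forall y, forall z, ((x, y) \in R) && ((y, z) \in R) ==> ((x, z) \in R)]].

Definition strict R (x y : 'I_n) : bool := (x != y) && ((x, y) \in R).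

Definition naturally_labelled R : bool :=
  [forall x, forall y, strict R x y ==> (x < y)%N].

Definition three_free R : bool :=
  ~~ [exists x, exists y, exists z, strict R x y && strict R y z].

Definition minimal R (x : 'I_n) : bool := [forall y, ~~ strict R y x].

Definition minimals R : {set 'I_n} := [set x | minimal R x].
End Posets.

Definition p (n k : nat) : nat :=
  #|[set R : {set 'I_n * 'I_n} |
      [&& is_poset R, naturally_labelled R, three_free R & #|minimals R| == k]]|.

Definition qint (q k : nat) : nat := \sum_(i < k) q ^ i.

Fixpoint qstirling (q n k : nat) : nat :=
  match n, k with
  | 0, 0 => 1
  | 0, _.+1 => 0
  | _.+1, 0 => 0
  | n'.+1, k'.+1 => qstirling q n' k' + qint q k'.+1 * qstirling q n' k'.+1
  end.

(* Formal power series in z with coefficients in a ring (here {poly int},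
   the variable of the polynomials being y). *)
Definition fps (R : Type) := nat -> R.

Section FPS.
Variable R : pzRingType.
Local Open Scope ring_scope.
Definition fps_const (c : R) : fps R := fun m => if m == 0%N then c else 0.
Definition fps_z : fps R := fun m => if m == 1%N then 1 else 0.
Definition fps_add (f g : fps R) : fps R := fun m => f m + g m.
Definition fps_sub (f g : fps R) : fps R := fun m => f m - g m.
Definition fps_mul (f g : fps R) : fps R :=
  fun m => \sum_(i < m.+1) f i * g (m - i)%N.
Definition fps_exp (f : fps R) (k : nat) : fps R := iter k (fps_mul f) (fps_const 1).
End FPS.
Arguments fps_z {R}.
Arguments fps_const {R}.

Local Open Scope ring_scope.

(* F(z,y) = sum_{n >= k >= 0} p(n,k) z^n y^k, as a series in z whose
   z^n-coefficient is the polynomial sum_{k<=n} p(n,k) y^k. *)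
Definition F : fps {poly int} := fun n => \sum_(k < n.+1) ((p n k)%:R : int) *: 'X^k.

Definition F2 : fps {poly int} := fun n => F n \Po (2%:P * 'X).

Definition fps_y : fps {poly int} := fps_const 'X.

Definition denom (k : nat) : fps {poly int} :=
  \big[@fps_mul _/fps_const 1]_(1 <= i < k.+1)
     fps_sub (fps_const 1) (fps_mul (fps_const ((2 ^ i - 1)%N%:R)) fps_z).

Definition num (k : nat) : fps {poly int} := fps_mul (fps_exp fps_z k) (fps_exp fps_y k).

From HB Require Import structures.
From mathcomp Require Import all_boot all_order all_algebra zify ring.
From Stdlib Require Import FunctionalExtensionality.
Set Implicit Arguments. Unset Strict Implicit. Unset Printing Implicit Defensive.
Import GRing.Theory.

(* In a 3-free naturally labelled poset on [n+1] the top label n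
   is maximal, and every element strictly below it is minimal in the poset
   restricted to [n] (otherwise there is a 3-chain).  Conversely, putting n
   above an arbitrary set S of minimal elements of a poset on [n] yields such a
   poset, whose minimal elements are those below n plus n itself iff S is
   empty.  Counting the choices of S gives
   p(n+1,k+1) = p(n,k) + (2^(k+1)-1) p(n,k+1).  The generating-function
   identities are then checked coefficientwise: the k-th column
   F_k = sum_n p(n,k) z^n y^k of F satisfies (1 - (2^k-1) z) F_k = z y F_(k-1),
   so F_k is the k-th summand of the product formula. *)

Definition nl3free n (R : {set 'I_n * 'I_n}) :=
  [&& is_poset R, naturally_labelled R & three_free R].

Lemma nl3freeP n (R : {set 'I_n * 'I_n}) :
  nl3free R <->
  [/\ forall x, (x, x) \in R,
      forall x y z, (x, y) \in R -> (y, z) \in R -> (x, z) \in R,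
      forall x y, x != y -> (x, y) \in R -> (x < y)%N &
      forall x y z, x != y -> y != z -> (x, y) \in R -> (y, z) \in R -> False].
Proof.
split.
- case/and3P=> /and3P[/forallP refl _ /forallP trans] /forallP nl /existsPn tf.
  split=> [x | x y z xy yz | x y xy Rxy | x y z xy yz Rxy Ryz].
  + exact: refl.
  + by move/forallP: (trans x) => /(_ y) /forallP /(_ z) /implyP; apply; rewrite xy yz.
  + by move/forallP: (nl x) => /(_ y) /implyP; apply; rewrite /strict xy Rxy.
  + by move: (tf x) => /existsPn /(_ y) /existsPn /(_ z); rewrite /strict xy yz Rxy Ryz.
- case=> refl trans nl tf; apply/and3P; split.
  + apply/and3P; split; first exact/forallP.
    * apply/forallP=> x; apply/forallP=> y; apply/implyP=> /andP[Rxy Ryx].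
      apply/negbNE/negP=> xy.
      have yx : y != x by rewrite eq_sym.
      by have := ltn_trans (nl _ _ xy Rxy) (nl _ _ yx Ryx); rewrite ltnn.
    * apply/forallP=> x; apply/forallP=> y; apply/forallP=> z.
      by apply/implyP=> /andP[]; apply: trans.
  + by apply/forallP=> x; apply/forallP=> y; apply/implyP=> /andP[]; apply: nl.
  + apply/existsPn=> x; apply/existsPn=> y; apply/existsPn=> z.
    by apply/negP=> /andP[/andP[xy Rxy] /andP[yz Ryz]]; apply: tf Rxy Ryz.
Qed.

Lemma pE n k :
  p n k = #|[set R : {set 'I_n * 'I_n} | nl3free R && (#|minimals R| == k)]|.
Proof. by apply: eq_card => R; rewrite !inE /nl3free !andbA. Qed.

Section RemoveTop.
Variable n : nat.
Local Notation emb := (@lift n.+1 ord_max).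
Implicit Types (R : {set 'I_n.+1 * 'I_n.+1}) (P : {set 'I_n * 'I_n}) (S : {set 'I_n}).

Definition restr R : {set 'I_n * 'I_n} := [set ab | (emb ab.1, emb ab.2) \in R].

Definition below_top R : {set 'I_n} := [set a | (emb a, ord_max) \in R].

Definition extend P S : {set 'I_n.+1 * 'I_n.+1} :=
  [set xy | match unlift ord_max xy.1, unlift ord_max xy.2 with
            | Some a, Some b => (a, b) \in P
            | Some a, None => a \in S
            | None, None => true
            | None, Some _ => false
            end].

Lemma restrE R a b : ((a, b) \in restr R) = ((emb a, emb b) \in R).
Proof. by rewrite inE. Qed.

Lemma below_topE R a : (a \in below_top R) = ((emb a, ord_max) \in R).
Proof. by rewrite inE. Qed.

Lemma extend_emb P S a b : ((emb a, emb b) \in extend P S) = ((a, b) \in P).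
Proof. by rewrite inE /= !liftK. Qed.

Lemma extend_emb_top P S a : ((emb a, ord_max) \in extend P S) = (a \in S).
Proof. by rewrite inE /= liftK unlift_none. Qed.

Lemma extend_top P S : (ord_max, ord_max) \in extend P S.
Proof. by rewrite inE /= unlift_none. Qed.

Lemma extend_top_emb P S b : ((ord_max, emb b) \in extend P S) = false.
Proof. by rewrite inE /= liftK unlift_none. Qed.

Lemma emb_neq_top a : emb a != ord_max.
Proof. by rewrite eq_sym neq_lift. Qed.

Lemma emb_lt_top a : (emb a < @ord_max n)%N.
Proof. by rewrite lift_max. Qed.

Lemma emb_eq a b : (emb a == emb b) = (a == b).
Proof. exact/inj_eq/lift_inj. Qed.

Lemma top_not_below a R : nl3free R -> (ord_max, emb a) \notin R.
Proof.
case/nl3freeP=> _ _ nl _; apply/negP=> /(nl _ _ (neq_lift _ a)).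
by rewrite ltnNge ltnW ?emb_lt_top.
Qed.

Ltac case_top x := let a := fresh "a" in have [a ->|->] := unliftP ord_max x.

Lemma nl3free_restr R : nl3free R -> nl3free (restr R).
Proof.
case/nl3freeP=> refl trans nl tf; apply/nl3freeP; split=> [x | x y z | x y | x y z].
- by rewrite restrE.
- by rewrite !restrE; apply: trans.
- by rewrite restrE -(emb_eq x y) => xy /(nl _ _ xy); rewrite !lift_max.
- by rewrite !restrE -(emb_eq x y) -(emb_eq y z); apply: tf.
Qed.

Lemma below_top_minimal R : nl3free R -> below_top R \subset minimals (restr R).
Proof.
case/nl3freeP=> _ _ _ tf; apply/subsetP=> a; rewrite below_topE inE => Rat.
apply/forallP=> b; apply/negP=> /andP[ba]; rewrite restrE -(emb_eq b a) in ba *.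
by move=> Rba; apply: tf ba (emb_neq_top a) Rba Rat.
Qed.

Lemma minimal_emb R a : nl3free R -> (emb a \in minimals R) = (a \in minimals (restr R)).
Proof.
move=> nlR; rewrite !inE; apply/forallP/forallP=> minR b.
- by have := minR (emb b); rewrite /strict restrE emb_eq.
- case_top b; first by have := minR a0; rewrite /strict restrE emb_eq.
  by rewrite /strict (negbTE (top_not_below a nlR)) andbF.
Qed.

Lemma minimal_top R : (ord_max \in minimals R) = (below_top R == set0).
Proof.
rewrite inE; apply/forallP/eqP=> [minR | noneR y].
- apply/setP=> a; rewrite below_topE inE; apply/negP=> Rat.
  by have := minR (emb a); rewrite /strict emb_neq_top Rat.
- case_top y; last by rewrite /strict eqxx.
  by rewrite /strict -below_topE noneR inE andbF.
Qed.

Lemma card_split_top (A : {set 'I_n.+1}) :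
  #|A| = (ord_max \in A) + #|[set a : 'I_n | emb a \in A]|.
Proof.
rewrite (cardD1 ord_max); congr (_ + _).
rewrite -(card_imset _ (@lift_inj n.+1 ord_max)); apply: eq_card => x.
rewrite !inE; case_top x.
- by rewrite emb_neq_top mem_imset ?inE //; apply: lift_inj.
- rewrite eqxx /=; apply/esym/negP=> /imsetP[b _ /eqP].
  by rewrite eq_sym (negbTE (emb_neq_top b)).
Qed.

Lemma card_minimals_restr R : nl3free R ->
  #|minimals R| = #|minimals (restr R)| + (below_top R == set0).
Proof.
move=> nlR; rewrite card_split_top minimal_top addnC; congr (_ + _).
by apply: eq_card => a; rewrite inE minimal_emb.
Qed.

Lemma extend_restr R : nl3free R -> R = extend (restr R) (below_top R).
Proof.
move=> nlR; apply/setP=> [[x y]]; case_top x; case_top y.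
- by rewrite extend_emb restrE.
- by rewrite extend_emb_top below_topE.
- by rewrite extend_top_emb (negbTE (top_not_below a nlR)).
- by case/nl3freeP: nlR => refl _ _ _; rewrite extend_top refl.
Qed.

Lemma nl3free_extend P S : nl3free P -> S \subset minimals P ->
  [/\ nl3free (extend P S), restr (extend P S) = P & below_top (extend P S) = S].
Proof.
case/nl3freeP=> refl trans nl tf /subsetP Smin.
have below_min a b : a != b -> (a, b) \in P -> b \in S -> False.
  by move=> ab Rab /Smin; rewrite inE => /forallP /(_ a); rewrite /strict ab Rab.
split; last 2 first.
- by apply/setP=> [[a b]]; rewrite restrE extend_emb.
- by apply/setP=> a; rewrite below_topE extend_emb_top.
apply/nl3freeP; split=> [x | x y z | x y | x y z]; case_top x; try case_top y; try case_top z;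
  rewrite ?extend_emb ?extend_emb_top ?extend_top_emb ?extend_top ?eqxx ?emb_eq //.
- exact: trans.
- by move=> Rab Sb; case: (eqVneq a a0) => [-> // | ab]; case: (below_min _ _ ab Rab Sb).
- by move=> ab /(nl _ _ ab); rewrite !lift_max.
- by move=> _ _; apply: emb_lt_top.
- exact: tf.
- by move=> ab _ Rab Sb; case: (below_min _ _ ab Rab Sb).
Qed.

Definition extension k P S :=
  [&& nl3free P, S \subset minimals P & #|minimals P| + (S == set0) == k].

Lemma card_nl3free_extension k :
  #|[set R : {set 'I_n.+1 * 'I_n.+1} | nl3free R && (#|minimals R| == k)]| =
  #|[set u : {set 'I_n * 'I_n} * {set 'I_n} | extension k u.1 u.2]|.
Proof.
rewrite -(card_in_imset (f := fun R => (restr R, below_top R))).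
- apply: eq_card => -[P S]; rewrite [in RHS]inE /=; apply/imsetP/idP.
  + case=> R; rewrite inE => /andP[nlR /eqP <-] [-> ->].
    by rewrite /extension nl3free_restr // below_top_minimal // (card_minimals_restr nlR) eqxx.
  + case/and3P=> nlP Smin /eqP cardP.
    have [nlRS restrRS belowRS] := nl3free_extend nlP Smin.
    exists (extend P S); last by rewrite restrRS belowRS.
    by rewrite inE nlRS card_minimals_restr // restrRS belowRS cardP eqxx.
- move=> R1 R2; rewrite !inE => /andP[nlR1 _] /andP[nlR2 _] [eq_restr eq_below].
  by rewrite (extend_restr nlR1) (extend_restr nlR2) eq_restr eq_below.
Qed.

End RemoveTop.

Lemma card_set_sum (T : finType) (P : pred T) : #|[set x | P x]| = \sum_x (P x : nat).
Proof. by rewrite -sum1dep_card big_mkcond; apply: eq_bigr => x _; case: (P x). Qed.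

Lemma card_nonempty_subsets (T : finType) (M : {set T}) :
  #|[set S : {set T} | (S \subset M) && (S != set0)]| = (2 ^ #|M| - 1)%N.
Proof.
rewrite -card_powerset [#|powerset M|](cardD1 set0) inE sub0set add1n subn1 /=.
by apply: eq_card => S; rewrite !inE andbC.
Qed.

Lemma sum_extension n k (R : {set 'I_n * 'I_n}) :
  \sum_(S : {set 'I_n}) (extension k.+1 R S : nat) =
  ((nl3free R && (#|minimals R| == k)) : nat) +
  ((nl3free R && (#|minimals R| == k.+1)) : nat) * (2 ^ k.+1 - 1).
Proof.
rewrite /extension; case: (nl3free R) => /=; last by rewrite big1.
rewrite (eq_bigr (fun S : {set 'I_n} => if S \subset minimals R
  then (#|minimals R| + (S == set0) == k.+1 : nat) else 0%N)) => [|S _]; last first.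
  by case: (S \subset _).
rewrite -big_mkcond (bigD1 set0) ?sub0set //= eqxx addn1 eqSS; congr (_ + _).
rewrite (eq_bigr (fun _ => (#|minimals R| == k.+1) : nat)); last first.
  by move=> S /andP[_ /negbTE ->]; rewrite addn0.
case: eqP => [cardR | _] /=; last by rewrite big1 // muln0.
by rewrite sum1dep_card mul1n -cardR -card_nonempty_subsets.
Qed.

Lemma p_rec n k : p n.+1 k.+1 = (p n k + (2 ^ k.+1 - 1) * p n k.+1)%N.
Proof.
rewrite pE card_nl3free_extension card_set_sum.
rewrite -(pair_big predT predT (fun R S => (extension k.+1 R S : nat))) /=.
rewrite (eq_bigr _ (fun R _ => sum_extension k R)) big_split /= -big_distrl /= mulnC.
by rewrite !pE !card_set_sum.
Qed.

Lemma p_gt n k : (n < k)%N -> p n k = 0%N.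
Proof.
move=> nk; rewrite pE; apply: eq_card0 => R; rewrite !inE.
apply/negP=> /andP[_ /eqP cardR]; have := max_card (minimals R).
by rewrite card_ord cardR leqNgt nk.
Qed.

Lemma pS0 n : p n.+1 0 = 0%N.
Proof.
rewrite pE; apply: eq_card0 => R; rewrite !inE.
apply/negP=> /andP[/nl3freeP[_ _ nl _] /eqP /cards0_eq noneR].
suff : ord0 \in minimals R by rewrite noneR inE.
by rewrite inE; apply/forallP=> y; apply/negP=> /andP[y0 /(nl _ _ y0)].
Qed.

Lemma p00 : p 0 0 = 1%N.
Proof.
rewrite pE -(cards1 (set0 : {set 'I_0 * 'I_0})); apply: eq_card => R.
have -> : R = set0 by apply/setP => -[[]].
rewrite !inE eqxx; apply/andP; split; first by apply/nl3freeP; split; case.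
by apply/eqP/eq_card0 => -[].
Qed.

Lemma qint2 k : qint 2 k = (2 ^ k - 1)%N.
Proof.
rewrite /qint; elim: k => [|k IHk]; first by rewrite big_ord0.
rewrite big_ord_recr /= IHk expnS; have := expn_gt0 2 k; lia.
Qed.

Lemma p_qstirling n k : p n k = qstirling 2 n k.
Proof.
elim: n k => [|n IHn] [|k] /=; first exact: p00.
- by rewrite p_gt.
- exact: pS0.
- by rewrite p_rec !IHn qint2.
Qed.

Section FormalPowerSeries.
Variable R : comNzRingType.
Local Open Scope ring_scope.
Implicit Types f g h : fps R.

(* Coefficients below M of a product only involve the truncations below M,
   so the ring laws of fps are inherited from {poly R}. *)
Definition fps_trunc M f : {poly R} := \poly_(i < M) f i.

Lemma fps_mul_trunc f g m M : (m < M)%N ->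
  fps_mul f g m = (fps_trunc M f * fps_trunc M g)`_m.
Proof.
move=> mM; rewrite coefM; apply: eq_bigr => i _; rewrite !coef_poly.
have iM : (i < M)%N by apply: leq_ltn_trans mM; rewrite -ltnS.
by rewrite iM (leq_ltn_trans (leq_subr _ _) mM).
Qed.

Lemma coefM_trunc (P P' Q : {poly R}) M m :
  (forall i, (i < M)%N -> P`_i = P'`_i) -> (m < M)%N -> (P * Q)`_m = (P' * Q)`_m.
Proof.
move=> eqPP' mM; rewrite !coefM; apply: eq_bigr => i _; rewrite eqPP' //.
by apply: leq_ltn_trans mM; rewrite -ltnS.
Qed.

Lemma coef_trunc_mul f g M i : (i < M)%N ->
  (fps_trunc M (fps_mul f g))`_i = (fps_trunc M f * fps_trunc M g)`_i.
Proof. by move=> iM; rewrite coef_poly iM (fps_mul_trunc _ _ iM). Qed.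

Lemma fps_mulC f g : fps_mul f g = fps_mul g f.
Proof.
apply: functional_extensionality => m.
by rewrite !(fps_mul_trunc _ _ (ltnSn m)) mulrC.
Qed.

Lemma fps_mulA f g h : fps_mul f (fps_mul g h) = fps_mul (fps_mul f g) h.
Proof.
apply: functional_extensionality => m.
rewrite (fps_mul_trunc _ _ (ltnSn m)) (fps_mul_trunc _ h (ltnSn m)).
rewrite (coefM_trunc _ (@coef_trunc_mul f g m.+1) (ltnSn m)) -mulrA.
rewrite mulrC (mulrC (fps_trunc m.+1 f)).
by rewrite (coefM_trunc _ (@coef_trunc_mul g h m.+1) (ltnSn m)).
Qed.

Lemma fps_trunc_const c M : (0 < M)%N -> fps_trunc M (fps_const c) = c%:P.
Proof.
move=> M0; apply/polyP => -[|i]; rewrite coef_poly coefC /fps_const /=; first by rewrite M0.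
by case: ifP.
Qed.

Lemma fps_mul_constE c f m : fps_mul (fps_const c) f m = c * f m.
Proof.
by rewrite (fps_mul_trunc _ _ (ltnSn m)) fps_trunc_const // coefCM coef_poly ltnSn.
Qed.

Lemma fps_mul1 f : fps_mul (fps_const 1) f = f.
Proof. by apply: functional_extensionality => m; rewrite fps_mul_constE mul1r. Qed.

Lemma fps_mul_zE f m : fps_mul fps_z f m = if m == 0%N then 0 else f m.-1.
Proof.
rewrite (fps_mul_trunc _ _ (ltnW (ltnSn m.+1))).
have -> : fps_trunc m.+2 fps_z = 'X.
  by apply/polyP => -[|[|i]]; rewrite coef_poly coefX /fps_z //=; case: ifP.
by rewrite coefXM coef_poly; case: m => //= m; rewrite ltnS ltnW.
Qed.

Lemma fps_mulBl f g h m : fps_mul (fps_sub f g) h m = fps_mul f h m - fps_mul g h m.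
Proof. by rewrite /fps_mul -sumrB; apply: eq_bigr => i _; apply: mulrBl. Qed.

Lemma fps_mul_coef0 f g : fps_mul f g 0%N = f 0%N * g 0%N.
Proof. by rewrite /fps_mul big_ord1. Qed.

Lemma fps_mulIr f g h : h 0%N = 1 ->
  (forall m, fps_mul f h m = fps_mul g h m) -> forall m, f m = g m.
Proof.
move=> h0 eq_fg m; elim/ltn_ind: m => m IHm.
move: (eq_fg m); rewrite /fps_mul !big_ord_recr /= subnn h0 !mulr1.
rewrite (eq_bigr (fun i : 'I_m => g i * h (m - i)%N)); first exact: addrI.
by move=> i _; rewrite IHm.
Qed.

HB.instance Definition _ := Monoid.isComLaw.Build (fps R) (fps_const 1)
  (@fps_mul R) fps_mulA fps_mulC fps_mul1.

End FormalPowerSeries.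

Local Open Scope ring_scope.

Definition denom_factor (i : nat) : fps {poly int} :=
  fps_sub (fps_const 1) (fps_mul (fps_const (2 ^ i - 1)%N%:R) fps_z).

Definition Fcol (k : nat) : fps {poly int} := fun m => (p m k)%:R *: 'X^k.

Lemma denom0 : denom 0 = fps_const 1.
Proof. by rewrite /denom big_geq. Qed.

Lemma denomS k : denom k.+1 = fps_mul (denom k) (denom_factor k.+1).
Proof. by rewrite /denom big_nat_recr. Qed.

Lemma denom_coef0 k : denom k 0%N = 1.
Proof.
elim: k => [|k IHk]; first by rewrite denom0.
rewrite denomS fps_mul_coef0 IHk mul1r /denom_factor /fps_sub fps_mul_constE.
by rewrite /fps_z /fps_const /= mulr0 subr0.
Qed.

Lemma numS k : num k.+1 = fps_mul fps_z (fps_mul fps_y (num k)).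
Proof.
rewrite /num /fps_exp !iterS -/(fps_exp _ _) -!fps_mulA; congr fps_mul.
by rewrite fps_mulC -fps_mulA; congr fps_mul; rewrite fps_mulC.
Qed.

Lemma Fcol_mul_factor k :
  fps_mul (Fcol k.+1) (denom_factor k.+1) = fps_mul fps_z (fps_mul fps_y (Fcol k)).
Proof.
apply: functional_extensionality => -[|m].
  by rewrite fps_mul_coef0 fps_mul_zE /Fcol p_gt // scale0r mul0r.
rewrite fps_mulC fps_mulBl fps_mul1 -fps_mulA fps_mul_constE !fps_mul_zE /=.
rewrite /fps_y fps_mul_constE /Fcol p_rec -!mul_polyC !rmorph_nat natrD natrM exprS.
ring.
Qed.

Lemma Fcol_mul_denom k m : fps_mul (Fcol k) (denom k) m = num k m.
Proof.
elim: k m => [|k IHk] m.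
  rewrite denom0 fps_mulC fps_mul1 /num /fps_exp /= fps_mul1 /Fcol /fps_const expr0.
  by case: m => [|m]; rewrite ?p00 ?scale1r // pS0 scale0r.
rewrite denomS numS.
have -> : num k = fps_mul (Fcol k) (denom k) by apply: functional_extensionality => j.
rewrite fps_mulA (fps_mulC (Fcol k.+1)) -fps_mulA Fcol_mul_factor.
by rewrite fps_mulC -!fps_mulA.
Qed.

Lemma Fcol_unique (G : nat -> fps {poly int}) :
  (forall k m, fps_mul (G k) (denom k) m = num k m) -> forall k m, G k m = Fcol k m.
Proof.
move=> eqG k; apply: (fps_mulIr (denom_coef0 k)) => m.
by rewrite eqG Fcol_mul_denom.
Qed.

Lemma coef_sumZXn (c : nat -> int) M j :
  (\sum_(k < M) c k *: 'X^k)`_j = if (j < M)%N then c j else 0.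
Proof.
rewrite coef_sum; case: ltnP => jM.
  rewrite (bigD1 (Ordinal jM)) //= coefZ coefXn eqxx mulr1 big1 ?addr0 // => k kj.
  by move: kj; rewrite coefZ coefXn -val_eqE /= eq_sym => /negbTE ->; rewrite mulr0.
rewrite big1 // => k _; rewrite coefZ coefXn gtn_eqF ?mulr0 //.
exact: leq_trans (ltn_ord k) jM.
Qed.

Lemma coefF m j : (F m)`_j = (p m j)%:R.
Proof.
by rewrite (coef_sumZXn (fun k => (p m k)%:R)); case: ltnP => // mj; rewrite p_gt.
Qed.

Lemma coefF2 m j : (F2 m)`_j = (p m j)%:R * 2 ^+ j.
Proof.
have -> : F2 m = \sum_(k < m.+1) ((p m k)%:R * 2 ^+ k) *: 'X^k.
  rewrite /F2 /F (big_morph (comp_poly (2%:P * 'X)) (fun a b => comp_polyD a b _)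
    (comp_poly0 _)).
  apply: eq_bigr => k _.
  by rewrite comp_polyZ comp_Xn_poly exprMn -rmorphXn mul_polyC scalerA.
rewrite (coef_sumZXn (fun k => (p m k)%:R * 2 ^+ k)).
by case: ltnP => // mj; rewrite p_gt // mul0r.
Qed.

Lemma F_rec m : F m =
  fps_add (fps_const 1)
    (fps_mul fps_z (fps_sub F2 (fps_mul (fps_sub (fps_const 1) fps_y) F))) m.
Proof.
rewrite /fps_add fps_mul_zE; case: m => [|m] /=.
  rewrite addr0 /fps_const /=; apply/polyP => j; rewrite coefF coef1.
  by case: j => [|j]; rewrite ?p00 // p_gt.
rewrite /fps_const /= add0r /fps_sub fps_mulBl fps_mul1 /fps_y fps_mul_constE.
apply/polyP => -[|j]; rewrite !coefB coefF coefF2 coefF coefXM /=.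
  by rewrite pS0 expr0 mulr1 subr0 subrr.
rewrite coefF p_rec natrD natrM natrB ?expn_gt0 // natrX.
ring.
Qed.

Lemma sum_Fcol m K : (m < K)%N -> \sum_(k < K) Fcol k m = F m.
Proof.
move=> mK; apply/polyP => j; rewrite (coef_sumZXn (fun k => (p m k)%:R)) coefF.
by case: ltnP => // Kj; rewrite p_gt // (leq_trans mK Kj).
Qed.

Theorem proposition4 :
  [/\ p 0 0 = 1%N,
      (forall n, (1 <= n)%N -> p n 0 = 0%N),
      (forall n k, (n < k)%N -> p n k = 0%N),
      (forall n k, (1 <= n)%N -> (1 <= k)%N ->
         p n k = (p n.-1 k.-1 + (2 ^ k - 1) * p n.-1 k)%N)
    & [/\
      (forall n k, p n k = qstirling 2 n k) /\
      (forall m, F m =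
         fps_add (fps_const 1)
           (fps_mul fps_z (fps_sub F2 (fps_mul (fps_sub (fps_const 1) fps_y) F))) m)
    & (* The quotients G k exist, and for any such G the series sum_k G k
         converges z-adically to F. *)
      (exists G : nat -> fps {poly int},
         forall k m, fps_mul (G k) (denom k) m = num k m) /\
      (forall G : nat -> fps {poly int},
         (forall k m, fps_mul (G k) (denom k) m = num k m) ->
         forall m, exists N, forall K, (N <= K)%N ->
           \sum_(k < K) G k m = F m)]].
Proof.
split; [exact: p00 | by case=> // n _; apply: pS0 | exact: p_gt | |].
  by case=> // n [|k] // _ _; rewrite p_rec.
split; [split; [exact: p_qstirling | exact: F_rec] | split].
  by exists Fcol; apply: Fcol_mul_denom.
move=> G eqG m; exists m.+1 => K mK; rewrite -(sum_Fcol mK).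
by apply: eq_bigr => k _; rewrite (Fcol_unique eqG).
Qed.
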